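(* Let $\widehat{T}=\begin{bmatrix}\hat t_{11}&\hat t_{12}\\0&\hat t_{22}\end{bmatrix}$ be a real matrix with $\hat t_{11}>0$, $\hat t_{12}\ge 0$, $\hat t_{22}\ge 0$ and $\hat t_{11}^2\ge \hat t_{12}^2+\hat t_{22}^2$. Put $x=\hat t_{12}/\hat t_{11}$, $y=\hat t_{22}/\hat t_{11}$, and assume $x\neq 1$. Define $$\tan(2\varphi)=\frac{-2xy}{(y-x)(y+x)+1},\qquad \tan\varphi=\frac{\tan(2\varphi)}{1+\sqrt{1+\tan^2(2\varphi)}},\qquad \cos\varphi=\frac{1}{\sqrt{1+\tan^2\varphi}},\quad \sin\varphi=\tan\varphi\cos\varphi,$$ $$\tanh\psi=-(x+y\tan\varphi).$$ Then the denominator of $\tan(2\varphi)$ is positive, $-1<\tan\varphi\le 0$, and $|\tanh\psi|<1$; hence $\cosh\psi=1/\sqrt{1-\tanh^2\psi}$ and $\sinh\psi=\tanh\psi\cosh\psi$ are well defined, and $$\begin{bmatrix}\cos\varphi&\sin\varphi\\-\sin\varphi&\cos\varphi\end{bmatrix}\widehat{T}\begin{bmatrix}\cosh\psi&\sinh\psi\\\sinh\psi&\cosh\psi\end{bmatrix}=\begin{bmatrix}\tilde\sigma_{11}'&0\\0&\tilde\sigma_{22}'\end{bmatrix},\qquad \tilde\sigma_{11}'=\frac{\cos\varphi}{\cosh\psi}\hat t_{11},\quad \tilde\sigma_{22}'=\frac{\cosh\psi}{\cos\varphi}\hat t_{22}.$$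
   Context: The left factor is a plane rotation (orthogonal) and the right factor is a hyperbolic rotation, which is $\widehat{J}$-orthogonal for $\widehat{J}=\mathrm{diag}(1,-1)$ or $\mathrm{diag}(-1,1)$ (i.e. $\widehat V^T\widehat J\widehat V=\widehat J$). This is the $2\times 2$ hyperbolic SVD of $\widehat T$ in the hyperbolic (indefinite $\widehat J$) case with $\widehat T$ upper triangular. *)

From HB Require Import structures.
From mathcomp Require Import all_boot all_order all_algebra.
Set Implicit Arguments. Unset Strict Implicit. Unset Printing Implicit Defensive.
Import Order.TTheory GRing.Theory Num.Theory.
Local Open Scope ring_scope.

Definition mx22 (R : nzRingType) (a b c d : R) : 'M[R]_2 :=
  \matrix_(i < 2, j < 2)
    if (val i == 0)%N then (if (val j == 0)%N then a else b)
    else (if (val j == 0)%N then c else d).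

(* A real 2x2 upper triangular matrix a [[1, x], [0, y]] is brought to diagonal form by
   a plane rotation on the left (tangent t) and a hyperbolic rotation on the right
   (hyperbolic tangent h).  Annihilating the (1,2) entry forces h = -(x + y t); then the
   (2,1) entry vanishes exactly when t is a root of the quadratic  x y t^2 - D t - x y
   with D = y^2 - x^2 + 1, i.e. when 2t/(1 - t^2) = -2xy/D, and the half-angle formula
   picks its root in (-1, 0].  The constraint x^2 + y^2 <= 1 with x <> 1 makes D > 0 and
   keeps |h| < 1, so that cosh is defined; the diagonal entries then simplify with
   cos^2 (1 + t^2) = 1 and cosh^2 (1 - h^2) = 1. *)
From HB Require Import structures.
From mathcomp Require Import all_boot all_order all_algebra.
From mathcomp Require Import ring lra.
Set Implicit Arguments.
Unset Strict Implicit.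
Unset Printing Implicit Defensive.

Import Order.TTheory GRing.Theory Num.Theory.
Local Open Scope ring_scope.

Lemma mx22_mul (R : comNzRingType) (a b c d e f g h : R) :
  mx22 a b c d *m mx22 e f g h =
  mx22 (a * e + b * g) (a * f + b * h) (c * e + d * g) (c * f + d * h).
Proof.
apply/matrixP => i j; rewrite !mxE !big_ord_recr big_ord0 /= add0r !mxE.
by case: i => [[|[|i]] Hi] //=; case: j => [[|[|j]] Hj].
Qed.

Definition half_tan (R : rcfType) (u : R) : R := u / (1 + Num.sqrt (1 + u ^+ 2)).

Section HalfTangent.
Variables (R : rcfType) (u : R).

Let sq := Num.sqrt (1 + u ^+ 2).

Let sq_ge0 : 0 <= sq. Proof. exact: sqrtr_ge0. Qed.

Let sqr_sq : sq ^+ 2 = 1 + u ^+ 2.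
Proof. by rewrite sqr_sqrtr // addr_ge0 // sqr_ge0. Qed.

Let den_gt0 : 0 < 1 + sq. Proof. by have := sq_ge0; lra. Qed.

Lemma half_tan_double : 2 * half_tan u = u * (1 - half_tan u ^+ 2).
Proof.
rewrite /half_tan -/sq; have den_neq0 := lt0r_neq0 den_gt0.
have -> : 1 - (u / (1 + sq)) ^+ 2 = ((1 + sq) ^+ 2 - u ^+ 2) / (1 + sq) ^+ 2
  by field.
rewrite [X in X - u ^+ 2]sqrrD sqr_sq.
by field.
Qed.

Lemma half_tan_gtN1 : -1 < half_tan u.
Proof.
rewrite /half_tan -/sq ltr_pdivlMr //.
suff : - u < sq by lra.
have := sqr_sq; have := sq_ge0; nra.
Qed.

Lemma half_tan_le0 : u <= 0 -> half_tan u <= 0.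
Proof. by move=> u_le0; rewrite /half_tan -/sq ler_pdivrMr // mul0r. Qed.

End HalfTangent.

Lemma invf_div1_sqrt (R : rcfType) (q : R) :
  0 < q -> (1 / Num.sqrt q)^-1 = 1 / Num.sqrt q * q.
Proof.
move=> q_gt0; have sq_neq0 : Num.sqrt q != 0 by rewrite gt_eqF ?sqrtr_gt0.
set s := Num.sqrt q in sq_neq0 *.
have -> : q = s ^+ 2 by rewrite sqr_sqrtr ?ltW.
by field.
Qed.

Lemma tan2_den_gt0 (R : realFieldType) (x y : R) :
  0 <= x -> x < 1 -> 0 < (y - x) * (y + x) + 1.
Proof. by move=> x_ge0 x_lt1; nra. Qed.

Lemma tanh_abs_lt1 (R : realFieldType) (x y t : R) :
  0 <= x < 1 -> 0 <= y <= 1 -> -1 < t <= 0 -> `|- (x + y * t)| < 1.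
Proof.
move=> /andP[x_ge0 x_lt1] /andP[y_ge0 y_le1] /andP[t_gtN1 t_le0].
rewrite normrN ltr_norml; apply/andP; split; nra.
Qed.

Lemma mx22_rot_hyprot_diag (R : fieldType) (a x y t h c C : R) :
  t * ((y - x) * (y + x) + 1) = - (x * y * (1 - t ^+ 2)) ->
  h = - (x + y * t) -> c^-1 = c * (1 + t ^+ 2) -> C^-1 = C * (1 - h ^+ 2) ->
  mx22 c (t * c) (- (t * c)) c *m mx22 a (x * a) 0 (y * a) *m mx22 C (h * C) (h * C) C
  = mx22 (c / C * a) 0 0 (C / c * (y * a)).
Proof.
move=> t_root -> c_inv C_inv; rewrite !mx22_mul C_inv c_inv.
congr mx22; [ring | ring | | ring].
have -> : (- (t * c) * a + c * 0) * C
          + (- (t * c) * (x * a) + c * (y * a)) * (- (x + y * t) * C)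
        = - c * C * a * (x * y * (1 - t ^+ 2) + t * ((y - x) * (y + x) + 1)) by ring.
by rewrite t_root; ring.
Qed.

Theorem theorem2p2 (R : rcfType) (t11 t12 t22 : R) :
  0 < t11 -> 0 <= t12 -> 0 <= t22 -> t12 ^+ 2 + t22 ^+ 2 <= t11 ^+ 2 ->
  let x := t12 / t11 in
  let y := t22 / t11 in
  x != 1 ->
  let tan2phi := (- 2 * x * y) / ((y - x) * (y + x) + 1) in
  let tanphi := tan2phi / (1 + Num.sqrt (1 + tan2phi ^+ 2)) in
  let cosphi := 1 / Num.sqrt (1 + tanphi ^+ 2) in
  let sinphi := tanphi * cosphi in
  let tanhpsi := - (x + y * tanphi) in
  let coshpsi := 1 / Num.sqrt (1 - tanhpsi ^+ 2) in
  let sinhpsi := tanhpsi * coshpsi in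
  [/\ 0 < (y - x) * (y + x) + 1,
      - 1 < tanphi <= 0,
      `|tanhpsi| < 1 &
      mx22 cosphi sinphi (- sinphi) cosphi *m mx22 t11 t12 0 t22
        *m mx22 coshpsi sinhpsi sinhpsi coshpsi
      = mx22 (cosphi / coshpsi * t11) 0 0 (coshpsi / cosphi * t22)].
Proof.
move=> t11_gt0 t12_ge0 t22_ge0 t_le x y x_neq1 t2 t c s h C S.
have x_ge0 : 0 <= x by rewrite /x divr_ge0 // ltW.
have y_ge0 : 0 <= y by rewrite /y divr_ge0 // ltW.
have xy_le1 : x ^+ 2 + y ^+ 2 <= 1.
  by rewrite /x /y !expr_div_n -mulrDl ler_pdivrMr ?mul1r ?exprn_gt0.
have x_lt1 : x < 1 by rewrite lt_neqAle x_neq1 /=; nra.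
have y_le1 : y <= 1 by nra.
have D_gt0 := tan2_den_gt0 y x_ge0 x_lt1.
have t2_D : t2 * ((y - x) * (y + x) + 1) = - 2 * x * y by rewrite mulfVK ?gt_eqF.
have t_range : -1 < t <= 0.
  apply/andP; split; first exact: half_tan_gtN1.
  by apply: half_tan_le0; rewrite ler_pdivrMr // mul0r; nra.
have h_lt1 : `|h| < 1.
  by apply: tanh_abs_lt1; rewrite // ?x_ge0 ?y_ge0.
split => //.
have -> : t12 = x * t11 by rewrite mulfVK ?gt_eqF.
have -> : t22 = y * t11 by rewrite mulfVK ?gt_eqF.
apply: mx22_rot_hyprot_diag => //.
- have t_double : 2 * t = t2 * (1 - t ^+ 2) := half_tan_double t2.
  apply: (mulfI (_ : 2 != 0 :> R)); first by rewrite pnatr_eq0.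
  by rewrite mulrA t_double mulrAC t2_D; ring.
- by apply: invf_div1_sqrt; rewrite ltr_wpDr ?sqr_ge0.
- by apply: invf_div1_sqrt; rewrite subr_gt0 -real_normK ?num_real // expr_lt1.
Qed.
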